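(* Let $A[0\ldots n-1]$, $B[0\ldots m-1]$ be sequences over a totally ordered alphabet. The sparse-DAG algorithm described in the context returns $\operatorname{LCBS}(A,B)$, the length of a longest common bitonic subsequence of $A$ and $B$.
   Context: A common subsequence of $A$ and $B$ is given by index pairs $(i_1,j_1),\dots,(i_\ell,j_\ell)$ with $i_1<\dots<i_\ell$, $j_1<\dots<j_\ell$ and $A[i_k]=B[j_k]$; it is bitonic if there is $h\in\{1,\dots,\ell\}$ with $A[i_1]<\dots<A[i_h]$ and $A[i_h]>\dots>A[i_\ell]$. $\operatorname{LCBS}(A,B)$ is the maximum length of a bitonic common subsequence ($0$ if there is none). Sparse-DAG algorithm: let $V=\{(i,j)\mid A[i]=B[j]\}$, sorted lexicographically by $(i$ ascending, $j$ ascending$)$. For $v=(i,j)\in V$ let $r_J(v)$ be $1$ plus the rank of $j$ among the distinct column indices in $V$, $r_V(v)$ the rank (from $1$) of $A[i]$ among the sorted distinct values of $A\cup B$, and $MAX_J=\max_v r_J(v)$. A 2-D range structure stores points with keys $(x,y)$ and values, supports $\textsc{Query}(a,b)$ = maximum value of stored points with $x\le a$, $y\le b$ ($0$ if none), and $\textsc{Update}((x,y),val)$. Forward pass (empty structure): for $v$ in sorted order, $INC[v]\gets\textsc{Query}(r_J(v)-1,r_V(v)-1)+1$, then $\textsc{Update}((r_J(v),r_V(v)),INC[v])$. Backward pass (new empty structure): for $v$ in reverse sorted order, with $\widehat r_J(v)=MAX_J-r_J(v)+1$, $DEC[v]\gets\textsc{Query}(\widehat r_J(v)-1,r_V(v)-1)+1$,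 then $\textsc{Update}((\widehat r_J(v),r_V(v)),DEC[v])$. Output $bestLen=\max\bigl(0,\max_{v\in V}(INC[v]+DEC[v]-1)\bigr)$. *)

From mathcomp Require Import all_boot all_order.
Set Implicit Arguments. Unset Strict Implicit. Unset Printing Implicit Defensive.
Import Order.TTheory.

Section LCBS.
Variables (d : Order.disp_t) (T : orderType d) (n m : nat).
Variables (A : 'I_n -> T) (B : 'I_m -> T).

Local Open Scope order_scope.

Definition common_subseq (s : seq ('I_n * 'I_m)) : Prop :=
  [/\ sorted ltn [seq nat_of_ord p.1 | p <- s],
      sorted ltn [seq nat_of_ord p.2 | p <- s] &
      all (fun p => A p.1 == B p.2) s].

(** Bitonic: some h in {1..l} with A[i_1] < ... < A[i_h] > ... > A[i_l]. *)
Definition bitonic (s : seq ('I_n * 'I_m)) : Prop :=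
  let vals := [seq A p.1 | p <- s] in
  exists h : nat, [/\ (0 < h)%N, (h <= size s)%N,
    sorted (fun x y => x < y) (take h vals) &
    sorted (fun x y => y < x) (drop h.-1 vals)].

Definition bitonic_common_subseq s := common_subseq s /\ bitonic s.

Definition is_LCBS (L : nat) : Prop :=
  ((L = 0%N /\ forall s, ~ bitonic_common_subseq s) \/
   exists s, bitonic_common_subseq s /\ size s = L) /\
  forall s, bitonic_common_subseq s -> (size s <= L)%N.

Definition V : seq ('I_n * 'I_m) :=
  [seq p <- [seq (i, j) | i <- enum 'I_n, j <- enum 'I_m] | A p.1 == B p.2].

Definition distinct_cols : seq nat :=
  sort leq (undup [seq nat_of_ord v.2 | v <- V]).

Definition rJ (v : 'I_n * 'I_m) : nat := (index (nat_of_ord v.2) distinct_cols).+2.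

Definition distinct_vals : seq T :=
  sort (fun x y => x <= y)
       (undup ([seq A i | i <- enum 'I_n] ++ [seq B j | j <- enum 'I_m])).

Definition rV (v : 'I_n * 'I_m) : nat := (index (A v.1) distinct_vals).+1.

Definition MAX_J : nat := (\max_(v <- V) rJ v)%N.

Definition rJhat (v : 'I_n * 'I_m) : nat := (MAX_J - rJ v + 1)%N.

End LCBS.

(** 2-D range structure: a list of stored points ((x,y), value). *)
Definition range_struct := seq ((nat * nat) * nat).

Definition rs_query (S : range_struct) (a b : nat) : nat :=
  \max_(p <- S | (p.1.1 <= a) && (p.1.2 <= b)) p.2.

Definition rs_update (S : range_struct) (k : nat * nat) (val : nat) : range_struct :=
  (k, val) :: S.

Fixpoint dag_pass (S : range_struct) (ks : seq (nat * nat)) : seq nat :=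
  match ks with
  | [::] => [::]
  | k :: ks' =>
      let val := (rs_query S (k.1 - 1) (k.2 - 1)).+1 in
      val :: dag_pass (rs_update S k val) ks'
  end.

Section Alg.
Variables (d : Order.disp_t) (T : orderType d) (n m : nat).
Variables (A : 'I_n -> T) (B : 'I_m -> T).

Definition INC : seq nat :=
  dag_pass [::] [seq (rJ A B v, rV A B v) | v <- V A B].

Definition DEC : seq nat :=
  rev (dag_pass [::] (rev [seq (rJhat A B v, rV A B v) | v <- V A B])).

Definition bestLen : nat :=
  maxn 0 (\max_(p <- zip INC DEC) (p.1 + p.2 - 1)).
End Alg.

From mathcomp Require Import all_boot all_order.
From mathcomp Require Import zify.
Set Implicit Arguments. Unset Strict Implicit. Unset Printing Implicit Defensive.

(* V is sorted lexicographically, so a match stored before v with a different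
   value lies in a strictly earlier row.  Hence the query at v, which sees the
   stored points of strictly smaller column and value rank, sees exactly the
   matches that may precede v in a common subsequence with strictly increasing
   values: INC[v] is the length of a longest such chain ending at v, and
   symmetrically (V reversed, columns reflected) DEC[v] that of a longest
   strictly decreasing chain starting at v.  Cutting a bitonic common
   subsequence at its peak, and conversely gluing two such chains at v, gives
   LCBS(A,B) = max_v (INC[v] + DEC[v] - 1). *)

(* Because of the truncated subtraction, this range condition of
   [rs_query _ (k.1 - 1) (k.2 - 1)] is strict dominance only when both
   coordinates of [k] are positive, as they are for every key of the algorithm. *)
Definition below (k' k : nat * nat) : bool := (k'.1 <= k.1 - 1) && (k'.2 <= k.2 - 1).

Lemma below_pos k' k : 0 < k.1 -> 0 < k.2 -> below k' k = (k'.1 < k.1) && (k'.2 < k.2).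
Proof. by rewrite /below; lia. Qed.

Lemma size_dag_pass S ks : size (dag_pass S ks) = size ks.
Proof. by elim: ks S => [|k ks IH] S //=; rewrite IH. Qed.

Lemma nth_dag_pass S ks t : t < size ks ->
  nth 0 (dag_pass S ks) t =
  (maxn (rs_query S ((nth (0, 0) ks t).1 - 1) ((nth (0, 0) ks t).2 - 1))
        (\max_(i < t | below (nth (0, 0) ks i) (nth (0, 0) ks t))
            nth 0 (dag_pass S ks) i)).+1.
Proof.
elim: ks S t => [|k ks IH] S [|t] //= lt_t; first by rewrite big_mkcond big_ord0 maxn0.
rewrite IH // [in RHS]big_mkcond big_ord_recl -big_mkcond /=.
rewrite /rs_update {1}/rs_query big_cons /= -/(rs_query S _ _) /below /=.
case: ifP => _; last by rewrite max0n.
set a := rs_query S _ _; set M := bigop _ _ _; lia.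
Qed.

Lemma sorted_rcons_rcons (X : Type) (r : rel X) s y x :
  sorted r (rcons (rcons s y) x) = sorted r (rcons s y) && r y x.
Proof. by rewrite -cats1 cat_rcons sorted_cat_cons /= andbT. Qed.

Definition pass_value (X : eqType) (key : X -> nat * nat) (xs : seq X) (x : X) : nat :=
  nth 0 (dag_pass [::] (map key xs)) (index x xs).

Section LongestChains.
Variables (X : eqType) (key : X -> nat * nat) (R : rel X) (xs : seq X).
Hypothesis xs_uniq : uniq xs.
Hypothesis R_below :
  {in xs &, forall x y, R x y = (index x xs < index y xs) && below (key x) (key y)}.

Local Notation value := (pass_value key xs).

Lemma pass_value_rec x : x \in xs ->
  value x = (\max_(i < index x xs | R (nth x xs i) x) value (nth x xs i)).+1.
Proof.
move=> xs_x; have lt_x : index x xs < size xs by rewrite index_mem.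
rewrite /pass_value nth_dag_pass ?size_map // /rs_query big_nil max0n.
congr _.+1; apply: eq_big => [i|i _]; have lt_i := ltn_trans (ltn_ord i) lt_x.
  by rewrite R_below ?mem_nth // index_uniq // ltn_ord !(nth_map x) // nth_index.
by rewrite index_uniq.
Qed.

Lemma chain_lt_pass_value c x :
  all (mem xs) (rcons c x) -> sorted R (rcons c x) -> size c < value x.
Proof.
elim/last_ind: c x => [|c y IH] x; rewrite all_rcons => /andP [xs_x xs_cy].
  by rewrite pass_value_rec.
rewrite sorted_rcons_rcons => /andP [R_cy Ryx].
have xs_y : y \in xs by move: xs_cy; rewrite all_rcons => /andP [].
have lt_yx : index y xs < index x xs by move: Ryx; rewrite R_below // => /andP [].
rewrite size_rcons pass_value_rec // ltnS.
apply: (bigmax_sup (Ordinal lt_yx)) => /=.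
  by rewrite nth_index.
by rewrite nth_index // IH.
Qed.

Lemma pass_value_chain x : x \in xs ->
  exists c, [/\ all (mem xs) c, sorted R (rcons c x) & (size c).+1 = value x].
Proof.
have [k] := ubnP (index x xs); elim: k x => // k IH x lt_xk xs_x.
rewrite pass_value_rec //.
case: (pickP (fun i : 'I_(index x xs) => R (nth x xs i) x)) => [i Ri | noR]; last first.
  by exists [::]; rewrite big_pred0.
rewrite (bigmax_eq_arg i) //; case: arg_maxnP => // j Rj _.
have lt_j : j < size xs by rewrite (ltn_trans (ltn_ord j)) ?index_mem.
have xs_y : nth x xs j \in xs by rewrite mem_nth.
have [|c [xs_c R_c <-]] := IH _ _ xs_y; first by rewrite index_uniq //; have := ltn_ord j; lia.
exists (rcons c (nth x xs j)).
by rewrite all_rcons xs_c sorted_rcons_rcons R_c Rj size_rcons andbT.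
Qed.

End LongestChains.

Lemma sorted_index_ltnE (X : eqType) (r : rel X) s :
  transitive r -> irreflexive r -> sorted r s ->
  {in s &, forall x y, (index x s < index y s) = r x y}.
Proof.
move=> r_tr r_irr r_s x y s_x s_y; apply/idP/idP; first exact: sorted_ltn_index.
move=> rxy; case: ltngtP => // [lt_yx | eq_xy].
  by have := r_tr _ _ _ rxy (sorted_ltn_index r_tr r_s _ _ s_y s_x lt_yx); rewrite r_irr.
by move: rxy; rewrite -(nth_index x s_x) eq_xy nth_index // r_irr.
Qed.

Lemma index_rev (X : eqType) (s : seq X) x : uniq s -> x \in s ->
  index x (rev s) = size s - (index x s).+1.
Proof.
move=> s_uniq s_x; have lt_x : index x s < size s by rewrite index_mem.
have lt_i : size s - (index x s).+1 < size s by lia.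
have e : size s - (size s - (index x s).+1).+1 = index x s by lia.
have {1}-> : x = nth x (rev s) (size s - (index x s).+1).
  by rewrite nth_rev // e nth_index.
by rewrite index_uniq ?rev_uniq ?size_rev.
Qed.

Lemma index_rev_ltn (X : eqType) (s : seq X) x y : uniq s -> x \in s -> y \in s ->
  (index x (rev s) < index y (rev s)) = (index y s < index x s).
Proof.
move=> s_uniq s_x s_y; rewrite !index_rev //.
by have := index_mem x s; have := index_mem y s; rewrite s_x s_y; lia.
Qed.

Lemma map_nth_index (X : eqType) (xs : seq X) (s : seq nat) :
  uniq xs -> size s = size xs -> [seq nth 0 s (index x xs) | x <- xs] = s.
Proof.
case: xs => [|x0 xs] xs_uniq size_s; first by case: s size_s.
apply: (@eq_from_nth _ 0) => [|i]; rewrite size_map // => lt_i.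
by rewrite (nth_map x0) // index_uniq.
Qed.

Lemma bigmax_mem_seq (X : eqType) (F : X -> nat) (r : seq X) :
  r != [::] -> exists2 x, x \in r & \max_(i <- r) F i = F x.
Proof.
elim: r => // x r IH _; rewrite big_cons.
case: r IH => [|y r] IH; first by exists x; rewrite ?mem_head // big_nil maxn0.
have [z r_z ->] := IH isT.
case: leqP => _; first by exists z; rewrite // inE r_z orbT.
by exists x; rewrite ?mem_head.
Qed.

(* Imported only now: it shadows the [nat] bigmax lemmas used above. *)
Import Order.TTheory.

Section SparseDAG.
Variables (d : Order.disp_t) (T : orderType d) (n m : nat).
Variables (A : 'I_n -> T) (B : 'I_m -> T).
Local Open Scope order_scope.
Local Notation Vs := (V A B).

Definition lexlt (u v : 'I_n * 'I_m) : bool :=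
  (u.1 < v.1)%N || (u.1 == v.1) && (u.2 < v.2)%N.

Lemma lexlt_trans : transitive lexlt.
Proof.
move=> v u w; rewrite /lexlt.
case/orP=> [lt_uv | /andP [/eqP eq_uv lt_uv]]; case/orP=> [lt_vw | /andP [/eqP eq_vw lt_vw]].
- by rewrite (ltn_trans lt_uv lt_vw).
- by rewrite -eq_vw lt_uv.
- by rewrite eq_uv lt_vw.
- by rewrite eq_uv eq_vw eqxx (ltn_trans lt_uv lt_vw) orbT.
Qed.

Lemma lexlt_irr : irreflexive lexlt.
Proof. by move=> u; rewrite /lexlt !ltnn andbF. Qed.

Lemma sorted_V : sorted lexlt Vs.
Proof.
apply: sorted_filter; first exact: lexlt_trans.
have enum_ltn k : pairwise (relpre val ltn) (enum 'I_k).
  by rewrite -pairwise_map val_enum_ord -sorted_pairwise ?iota_ltn_sorted //; apply: ltn_trans.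
rewrite sorted_pairwise; last exact: lexlt_trans.
elim: (enum 'I_n) (enum_ltn n) => [|i s IH] //= /andP [i_s s_ltn].
rewrite pairwise_cat IH // andbT pairwise_map.
apply/andP; split.
  apply/allrelP => _ _ /mapP [j _ ->] /allpairsP [[i' j'] [s_i' _ ->]].
  by move/allP: i_s => /(_ _ s_i'); rewrite /lexlt /= => ->.
by apply: sub_pairwise (enum_ltn m) => j j' /= lt_j; rewrite /lexlt /= eqxx lt_j orbT.
Qed.

Lemma uniq_V : uniq Vs.
Proof. exact: (sorted_uniq lexlt_trans lexlt_irr sorted_V). Qed.

Lemma mem_V u : (u \in Vs) = (A u.1 == B u.2).
Proof.
rewrite mem_filter andb_idr // => _.
by apply/allpairsP; exists u; rewrite !mem_enum; case: u.
Qed.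

Lemma index_V_ltn u v : u \in Vs -> v \in Vs -> A u.1 != A v.1 ->
  (index u Vs < index v Vs)%N = (u.1 < v.1)%N.
Proof.
move=> Vu Vv neq_uv; rewrite (sorted_index_ltnE lexlt_trans lexlt_irr sorted_V) //.
rewrite /lexlt; case: eqP => [eq_uv | _]; last by rewrite orbF.
by rewrite eq_uv eqxx in neq_uv.
Qed.

Lemma rJ_ltn u v : u \in Vs -> v \in Vs -> (rJ A B u < rJ A B v)%N = (u.2 < v.2)%N.
Proof.
have cols w : w \in Vs -> (w.2 : nat) \in distinct_cols A B.
  move=> Vw; rewrite mem_sort mem_undup.
  exact: (map_f (fun v : 'I_n * 'I_m => (v.2 : nat))).
have sorted_cols : sorted ltn (distinct_cols A B).
  by rewrite ltn_sorted_uniq_leq sort_uniq undup_uniq (sort_sorted leq_total).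
by move=> Vu Vv; rewrite !ltnS (sorted_index_ltnE ltn_trans ltnn sorted_cols) ?cols.
Qed.

Lemma rV_ltn u v : (rV A B u < rV A B v)%N = (A u.1 < A v.1).
Proof.
have vals w : A w \in distinct_vals A B by rewrite mem_sort mem_undup mem_cat map_f ?mem_enum.
have sorted_vals : sorted <%O (distinct_vals A B) by rewrite sort_lt_sorted undup_uniq.
by rewrite ltnS (sorted_index_ltnE lt_trans ltxx sorted_vals) ?vals.
Qed.

Lemma rJhat_ltn u v : u \in Vs -> v \in Vs -> (rJhat A B u < rJhat A B v)%N = (v.2 < u.2)%N.
Proof.
have rJ_le w : w \in Vs -> (rJ A B w <= MAX_J A B)%N by move=> Vw; apply: leq_bigmax_seq.
move=> Vu Vv; rewrite -rJ_ltn //; have := rJ_le _ Vu; have := rJ_le _ Vv.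
rewrite /rJhat; lia.
Qed.

Definition inc (u v : 'I_n * 'I_m) : bool :=
  [&& (u.1 < v.1)%N, (u.2 < v.2)%N & A u.1 < A v.1].
Definition dec (u v : 'I_n * 'I_m) : bool :=
  [&& (u.1 < v.1)%N, (u.2 < v.2)%N & A v.1 < A u.1].

Definition inc_key (v : 'I_n * 'I_m) : nat * nat := (rJ A B v, rV A B v).
Definition dec_key (v : 'I_n * 'I_m) : nat * nat := (rJhat A B v, rV A B v).

Lemma inc_below : {in Vs &, forall u v,
  inc u v = (index u Vs < index v Vs)%N && below (inc_key u) (inc_key v)}.
Proof.
move=> u v Vu Vv; rewrite below_pos //= rJ_ltn // rV_ltn /inc.
have [lt_uv | _] := boolP (A u.1 < A v.1); last by rewrite !andbF.
by rewrite index_V_ltn ?(lt_eqF lt_uv).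
Qed.

Lemma dec_below : {in rev Vs &, forall u v,
  dec v u = (index u (rev Vs) < index v (rev Vs))%N && below (dec_key u) (dec_key v)}.
Proof.
move=> u v; rewrite !mem_rev => Vu Vv.
have rJhat_gt0 w : (0 < rJhat A B w)%N by rewrite /rJhat addn1.
rewrite index_rev_ltn ?uniq_V // below_pos ?rJhat_gt0 // rJhat_ltn // rV_ltn /dec.
have [lt_uv | _] := boolP (A u.1 < A v.1); last by rewrite !andbF.
by rewrite index_V_ltn ?(gt_eqF lt_uv).
Qed.

Definition inc_value : 'I_n * 'I_m -> nat := pass_value inc_key Vs.
Definition dec_value : 'I_n * 'I_m -> nat := pass_value dec_key (rev Vs).

Lemma INC_map : INC A B = map inc_value Vs.
Proof. by rewrite /inc_value /pass_value map_nth_index ?uniq_V // size_dag_pass size_map. Qed.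

Lemma DEC_map : DEC A B = map dec_value Vs.
Proof.
rewrite -[in RHS](revK Vs) map_rev /dec_value /pass_value map_nth_index.
- by rewrite map_rev.
- by rewrite rev_uniq uniq_V.
- by rewrite size_dag_pass size_map.
Qed.

Lemma bestLen_bigmax : bestLen A B = \max_(v <- Vs) (inc_value v + dec_value v - 1)%N.
Proof. by rewrite /bestLen INC_map DEC_map zip_map big_map max0n. Qed.

Lemma inc_chain_lt cs p :
  all (mem Vs) (rcons cs p) -> sorted inc (rcons cs p) -> (size cs < inc_value p)%N.
Proof. exact: (chain_lt_pass_value uniq_V inc_below). Qed.

Lemma dec_chain_lt p ds :
  all (mem Vs) (p :: ds) -> sorted dec (p :: ds) -> (size ds < dec_value p)%N.
Proof.
have uniq_rV : uniq (rev Vs) by rewrite rev_uniq uniq_V.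
move=> V_pds dec_pds; rewrite -size_rev.
apply: (chain_lt_pass_value uniq_rV dec_below); rewrite -rev_cons.
  by rewrite all_rev (eq_all (mem_rev Vs)).
by rewrite rev_sorted.
Qed.

Lemma inc_chain_exists p : p \in Vs ->
  exists cs : seq ('I_n * 'I_m),
    [/\ all (mem Vs) cs, sorted inc (rcons cs p) & (size cs).+1 = inc_value p].
Proof. exact: (pass_value_chain uniq_V inc_below). Qed.

Lemma dec_chain_exists p : p \in Vs ->
  exists ds : seq ('I_n * 'I_m),
    [/\ all (mem Vs) ds, sorted dec (p :: ds) & (size ds).+1 = dec_value p].
Proof.
have uniq_rV : uniq (rev Vs) by rewrite rev_uniq uniq_V.
rewrite -mem_rev => rV_p.
have [c [rV_c dec_c size_c]] := pass_value_chain uniq_rV dec_below rV_p.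
exists (rev c); split; last by rewrite size_rev size_c.
  by move: rV_c; rewrite all_rev (eq_all (mem_rev Vs)).
by rewrite -rev_rcons rev_sorted.
Qed.

Lemma bitonic_common_subseq_split s : bitonic_common_subseq A B s ->
  exists cs p ds, [/\ s = cs ++ p :: ds, sorted inc (rcons cs p),
                      sorted dec (p :: ds) & all (mem Vs) s].
Proof.
case=> [[fst_s snd_s match_s] [h [h_gt0 lt_h inc_vals dec_vals]]].
case: h h_gt0 lt_h inc_vals dec_vals => // k _ lt_k inc_vals dec_vals.
have [x0 _] : exists x0 : 'I_n * 'I_m, True.
  by move: lt_k; clear -s; case: s => [|x0 _] //; exists x0.
rewrite sorted_map in fst_s; rewrite sorted_map in snd_s.
exists (take k s), (nth x0 s k), (drop k.+1 s); split.
- by rewrite -drop_nth // cat_take_drop.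
- rewrite -take_nth //; rewrite -map_take sorted_map in inc_vals.
  by rewrite /inc !sorted_relI inc_vals !take_sorted.
- rewrite -drop_nth //; rewrite /= -map_drop sorted_map in dec_vals.
  by rewrite /dec !sorted_relI dec_vals !drop_sorted.
- by apply/allP => u s_u; rewrite /= mem_V (allP match_s).
Qed.

Lemma bitonic_common_subseq_cat cs p ds :
  sorted inc (rcons cs p) -> sorted dec (p :: ds) -> all (mem Vs) (cs ++ p :: ds) ->
  bitonic_common_subseq A B (cs ++ p :: ds).
Proof.
move=> inc_cp dec_pds V_s.
have sorted_s r : subrel inc r -> subrel dec r -> sorted r (cs ++ p :: ds).
  move=> inc_r dec_r; rewrite sorted_cat_cons (sub_sorted inc_r inc_cp).
  exact: (sub_sorted dec_r dec_pds).
split; first split.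
- by rewrite sorted_map; apply: sorted_s => u v /and3P [].
- by rewrite sorted_map; apply: sorted_s => u v /and3P [].
- by apply/allP => u /(allP V_s) V_u; rewrite -mem_V.
exists (size cs).+1; split => //.
- by rewrite size_cat /= addnS ltnS leq_addr.
- rewrite -map_take -cat_rcons -(size_rcons cs p) take_size_cat // sorted_map.
  by apply: sub_sorted inc_cp => u v /and3P [].
- rewrite /= -map_drop drop_size_cat // sorted_map.
  by apply: sub_sorted dec_pds => u v /and3P [].
Qed.

Lemma bitonic_common_subseq_size_le s : bitonic_common_subseq A B s ->
  exists2 p, p \in Vs & (size s <= inc_value p + dec_value p - 1)%N.
Proof.
case/bitonic_common_subseq_split => cs [p [ds [-> inc_cp dec_pds]]].
rewrite all_cat /= => /and3P [V_cs V_p V_ds]; exists p => //.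
have lt_cs : (size cs < inc_value p)%N.
  by apply: inc_chain_lt inc_cp; rewrite all_rcons V_cs andbT.
have lt_ds : (size ds < dec_value p)%N.
  by apply: dec_chain_lt dec_pds; rewrite /= V_ds andbT.
by rewrite size_cat /=; lia.
Qed.

Lemma bitonic_common_subseq_through v : v \in Vs -> exists s,
  bitonic_common_subseq A B s /\ size s = (inc_value v + dec_value v - 1)%N.
Proof.
move=> V_v; have [cs [V_cs inc_cv size_cs]] := inc_chain_exists V_v.
have [ds [V_ds dec_vds size_ds]] := dec_chain_exists V_v.
exists (cs ++ v :: ds); split; last by rewrite size_cat /=; lia.
by apply: bitonic_common_subseq_cat; rewrite // all_cat /= V_cs V_ds andbT.
Qed.

End SparseDAG.

Theorem mainTheorem7 (d : Order.disp_t) (T : orderType d) (n m : nat)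
  (A : 'I_n -> T) (B : 'I_m -> T) :
  is_LCBS A B (bestLen A B).
Proof.
have bestLen_ub s : bitonic_common_subseq A B s -> (size s <= bestLen A B)%N.
  case/bitonic_common_subseq_size_le => p V_p le_s; rewrite bestLen_bigmax.
  exact: leq_trans le_s (leq_bigmax_seq _ V_p _).
split => //; have [V_nil | V_cons] := eqVneq (V A B) [::].
  left; split; first by rewrite bestLen_bigmax V_nil big_nil.
  by move=> s /bitonic_common_subseq_size_le [p]; rewrite V_nil.
right; rewrite bestLen_bigmax.
have [v V_v ->] := bigmax_mem_seq (fun v => inc_value A B v + dec_value A B v - 1) V_cons.
exact: bitonic_common_subseq_through.
Qed.
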